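(* Let $\mu_0$ be the ideal expectation of a bounded observable; single shots at noise $\epsilon\ge0$ have mean $\mu(\epsilon)$ and variance $v(\epsilon)$. Fix a Richardson rule of order $k\ge1$: scale factors $1=\lambda_0<\cdots<\lambda_k$, coefficients $c_j$ with $\sum_jc_j=1$, $\sum_jc_j\lambda_j^m=0$ ($m=1,\ldots,k$), allocation fractions $\pi_j>0$, $\sum_j\pi_j=1$. With total budget $B$, the unmitigated estimator uses $B$ shots at noise $\epsilon$; the ZNE estimator is $\sum_jc_j\widehat\mu(\lambda_j\epsilon)$ with $\widehat\mu(\lambda_j\epsilon)$ the mean of $\pi_jB$ shots at noise $\lambda_j\epsilon$, samples at distinct scales independent. Assume: (A1$(k)$) uniformly over $j$, $\mu(\lambda_j\epsilon)=\mu_0+\sum_{m=1}^ka_m\lambda_j^m\epsilon^m+O(\epsilon^{k+1})$ with $a_1=\alpha\ne0$; (A4) uniformly over the scaled noise levels, $v(\epsilon)=\nu\epsilon^q+O(\epsilon^{q+\delta_v})$ with $\nu>0$, $\delta_v>0$; (A5) the MSE difference $\Delta_{\mathrm{MSE}}(\epsilon,B)=\mathrm{MSE}_{\mathrm{noisy}}-\mathrm{MSE}_{\mathrm{ZNE}}$ satisfies \[ \Delta_{\mathrm{MSE}}(\epsilon,B)=\alpha^2\epsilon^2-\frac{K_{q,k}\epsilon^q}{B}+R(\epsilon,B),\qquad R=O(\epsilon^{2+\delta_b})+O(\epsilon^{q+\delta_v}/B), \] for some $\delta_b>0$, with differentiable power-law remainder whose rescaled version $B^{2/(2-q)}R(xB^{-1/(2-q)},B)$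 and its $x$-derivative tend to $0$ uniformly on compact subsets of $(0,\infty)$ when $q<2$, where $K_{q,k}=\nu[\sum_j c_j^2\lambda_j^q/\pi_j-1]$. Then $K_{q,k}>0$, and: if $0\le q<2$, the lower local perturbative crossing of $\Delta_{\mathrm{MSE}}(\cdot,B)$ satisfies \[ \epsilon^*(B)\sim C_{q,k}B^{-1/(2-q)},\qquad C_{q,k}=\left(\frac{K_{q,k}}{\alpha^2}\right)^{1/(2-q)}; \] if $q=2$, the local sign of $\Delta_{\mathrm{MSE}}$ for small $\epsilon>0$ is governed by the budget threshold $B^*=K_{2,k}/\alpha^2$ (ZNE helps for all small $\epsilon$ if $B>B^*$, harms if $B<B^*$); if $q>2$, the leading variance penalty is too small near zero to create a shrinking lower boundary (for each large fixed $B$, $\Delta_{\mathrm{MSE}}>0$ for all sufficiently small $\epsilon>0$, absent sign changes from higher-order terms).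
   Context: $\mathrm{MSE}(\widehat\mu)=\mathbb E[(\widehat\mu-\mu_0)^2]$. The lower local perturbative crossing is the first positive zero of $\Delta_{\mathrm{MSE}}(\cdot,B)$, in a window of the form $\{xB^{-1/(2-q)}:x\in[m,M]\}$ with $0<m<C_{q,k}<M$, across which $\Delta_{\mathrm{MSE}}$ changes from negative (ZNE harms) to positive (ZNE helps); $\epsilon^*(B)\sim g(B)$ means the ratio tends to $1$ as $B\to\infty$. *)

From HB Require Import structures.
From mathcomp Require Import all_boot all_order all_algebra.
From mathcomp Require Import all_classical all_reals all_analysis.
Set Implicit Arguments. Unset Strict Implicit. Unset Printing Implicit Defensive.
Import Order.TTheory GRing.Theory Num.Theory.
Import numFieldNormedType.Exports.
Local Open Scope ring_scope.

Section ZNE.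
Variable R : realType.

Definition is_richardson_rule (k : nat) (lam c pi : nat -> R) : Prop :=
  [/\ (1 <= k)%N,
      lam 0%N = 1,
      (forall j, (j < k)%N -> lam j < lam j.+1),
      \sum_(j < k.+1) c j = 1
    & (forall m, (1 <= m <= k)%N -> \sum_(j < k.+1) c j * lam j ^+ m = 0)] /\
  ((forall j, (j <= k)%N -> 0 < pi j) /\ \sum_(j < k.+1) pi j = 1).

(* MSE of the unmitigated estimator (mean of B i.i.d. shots at noise eps,
   each with mean mu eps and variance v eps), relative to the ideal value mu0:
   E[(hat mu - mu0)^2] = bias^2 + variance. *)
Definition mse_noisy (mu v : R -> R) (mu0 B eps : R) : R :=
  (mu eps - mu0) ^+ 2 + v eps / B.

(* MSE of the ZNE estimator sum_j c_j hat mu(lam_j eps), where hat mu(lam_j eps)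
   is the mean of pi_j B i.i.d. shots at noise lam_j eps, samples at distinct
   scales independent: bias^2 + sum_j c_j^2 v(lam_j eps) / (pi_j B). *)
Definition mse_zne (k : nat) (lam c pi : nat -> R) (mu v : R -> R)
  (mu0 B eps : R) : R :=
  (\sum_(j < k.+1) c j * mu (lam j * eps) - mu0) ^+ 2
  + \sum_(j < k.+1) c j ^+ 2 * v (lam j * eps) / (pi j * B).

Definition delta_mse (k : nat) (lam c pi : nat -> R) (mu v : R -> R)
  (mu0 eps B : R) : R :=
  mse_noisy mu v mu0 B eps - mse_zne k lam c pi mu v mu0 B eps.

Definition K_qk (k : nat) (lam c pi : nat -> R) (nu q : R) : R :=
  nu * (\sum_(j < k.+1) c j ^+ 2 * lam j `^ q / pi j - 1).

Definition delta_remainder (k : nat) (lam c pi : nat -> R) (mu v : R -> R)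
  (mu0 alpha nu q eps B : R) : R :=
  delta_mse k lam c pi mu v mu0 eps B
  - (alpha ^+ 2 * eps ^+ 2 - K_qk k lam c pi nu q * eps `^ q / B).

(* e is the lower local perturbative crossing of D(., B) in the window
   { x B^{-1/(2-q)} : x in [m, M] }: a zero of D(., B) in the window, with
   D(., B) < 0 on the part of the window to its left (so it is the first zero
   in the window) and D(., B) > 0 on the part to its right. *)
Definition is_lower_crossing (D : R -> R -> R) (q m M B e : R) : Prop :=
  let lo := m * B `^ (- (2 - q)^-1) in
  let hi := M * B `^ (- (2 - q)^-1) in
  [/\ lo <= e <= hi,
      D e B = 0,
      (forall x, lo <= x < e -> D x B < 0)
    & (forall x, e < x <= hi -> 0 < D x B)].

End ZNE.

From HB Require Import structures.
From mathcomp Require Import all_boot all_order all_algebra.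
From mathcomp Require Import all_classical all_reals all_analysis.
From mathcomp Require Import ring lra.
Import Order.TTheory GRing.Theory Num.Theory.
Import numFieldNormedType.Exports.
Local Open Scope ring_scope.
Local Open Scope classical_set_scope.

(* K > 0 because
   sum_j c_j^2 lam_j^q / pi_j >= sum_j c_j^2 / pi_j = 1 + sum_j (c_j - pi_j)^2 / pi_j
   and c = pi is incompatible with sum_j c_j lam_j = 0.
   For q >= 2, Delta / eps^2 tends to alpha^2 - K / B (q = 2) or to alpha^2 (q > 2)
   as eps -> 0+, which fixes the sign of Delta for small eps.
   For q < 2, the substitution eps = x B^(-1/(2-q)) turns B^(2/(2-q)) Delta into the
   profile alpha^2 x^2 - K x^q plus the rescaled remainder, which vanishes with its
   derivative uniformly on compacts.  The profile is negative before its zero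
   C = (K / alpha^2)^(1/(2-q)), positive after it and strictly increasing near it;
   these properties survive a C^1-small perturbation, so for large B the rescaled
   Delta has exactly one sign change in [m, M], and it lies arbitrarily close to C. *)

Section RealFacts.
Context {R : realType}.

Lemma powR_split (s r : R) {y : R} : 0 < y -> y `^ r = y `^ s * y `^ (r - s).
Proof.
by move=> y_gt0; rewrite -powRD ?(gt_eqF y_gt0) ?implybT // addrC subrK.
Qed.

Lemma ler_powR_base (r x y : R) : 0 <= r -> 0 <= x -> x <= y -> x `^ r <= y `^ r.
Proof.
move=> r_ge0 x_ge0 xy.
by apply: (ge0_ler_powR r_ge0) => //; rewrite nnegrE // (le_trans x_ge0 xy).
Qed.

Lemma ltr_powR_base (r x y : R) : 0 < r -> 0 <= x -> x < y -> x `^ r < y `^ r.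
Proof.
move=> r_gt0 x_ge0 xy.
by apply: (gt0_ltr_powR r_gt0) => //; rewrite nnegrE // (le_trans x_ge0 (ltW xy)).
Qed.

Lemma near_right0P (P : R -> Prop) :
  (\forall e \near 0^'+, P e) <-> exists e0, 0 < e0 /\ forall e, 0 < e < e0 -> P e.
Proof.
split=> [|[e0 [e0_gt0 Pe]]].
  move=> -[d /= d_gt0 Pd]; exists d; split=> // e /andP[e_gt0 ed].
  by apply: (Pd e) => //; rewrite /ball_ /= sub0r normrN gtr0_norm.
near=> e; apply: Pe; apply/andP; split.
  by near: e; exact: nbhs_right_gt.
by near: e; exact: nbhs_right_lt.
Unshelve. all: end_near.
Qed.

Lemma derivable_scaled (f : R -> R) (p s y : R) :
  derivable f (y * s) 1 -> derivable (fun z : R => p * f (z * s)) y 1.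
Proof.
move=> df; apply: derivableM; first exact: derivable_cst.
have ds : derivable (fun z : R => z * s) y 1.
  exact: derivableM (@derivable_id R R^o y 1) (@derivable_cst R R^o R^o s y 1).
by apply/derivable1_diffP; apply: differentiable_comp; exact/derivable1_diffP.
Qed.

End RealFacts.

Section RichardsonRule.
Context {R : realType} {k : nat} {lam c pi : nat -> R}.
Hypothesis rule : is_richardson_rule k lam c pi.

Lemma richardson_scale_ge1 j : (j <= k)%N -> 1 <= lam j.
Proof.
case: rule => -[_ lam0 lam_lt _ _] _.
elim: j => [|j IHj] jk; first by rewrite lam0.
exact: le_trans (IHj (ltnW jk)) (ltW (lam_lt _ jk)).
Qed.

Lemma richardson_alloc_gt0 (j : 'I_k.+1) : 0 < pi j.
Proof. by case: rule => _ [pi_gt0 _]; apply: pi_gt0; rewrite -ltnS. Qed.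

(* [sum_j c_j^2 / pi_j - 1] is the chi-square distance of [c] from [pi], and
   [c = pi] would violate the first moment condition. *)
Lemma richardson_sum_sqr_div_gt1 : 1 < \sum_(j < k.+1) c j ^+ 2 / pi j.
Proof.
case: rule => -[k_ge1 _ _ sum_c moment] [_ sum_pi].
have chi2 : \sum_(j < k.+1) c j ^+ 2 / pi j - 1
    = \sum_(j < k.+1) (c j - pi j) ^+ 2 / pi j.
  transitivity (\sum_(j < k.+1) (c j ^+ 2 / pi j - 2 * c j + pi j)).
    by rewrite !big_split /= sumrN -big_distrr /= sum_c sum_pi; ring.
  apply: eq_bigr => j _; have := richardson_alloc_gt0 j.
  by move=> /gt_eqF pi_neq0; field; rewrite pi_neq0.
have chi2_ge0 (j : 'I_k.+1) : 0 <= (c j - pi j) ^+ 2 / pi j.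
  by rewrite divr_ge0 ?sqr_ge0 ?ltW ?richardson_alloc_gt0.
rewrite -subr_gt0 chi2 lt0r sumr_ge0 // andbT; apply/eqP => /psumr_eq0P chi2_eq0.
have c_eq_pi (j : 'I_k.+1) : c j = pi j.
  have /eqP := chi2_eq0 (fun i _ => chi2_ge0 i) j isT.
  rewrite mulf_eq0 invr_eq0 (gt_eqF (richardson_alloc_gt0 j)) orbF sqrf_eq0.
  by rewrite subr_eq0 => /eqP.
have lam_gt0 (j : 'I_k.+1) : 0 < lam j.
  by rewrite (lt_le_trans ltr01) // richardson_scale_ge1 // -ltnS.
have := moment 1%N; rewrite k_ge1 => /(_ isT) /eqP; apply/negP; rewrite gt_eqF //.
rewrite (eq_bigr (fun j : 'I_k.+1 => pi j * lam j)) => [|j _]; last by rewrite c_eq_pi.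
rewrite big_ord_recl ltr_pwDl ?mulr_gt0 ?richardson_alloc_gt0 //.
by apply: sumr_ge0 => j _; rewrite mulr_ge0 ?ltW ?richardson_alloc_gt0.
Qed.

Lemma K_qk_gt0 {nu q : R} : 0 < nu -> 0 <= q -> 0 < K_qk k lam c pi nu q.
Proof.
move=> nu_gt0 q_ge0; rewrite /K_qk mulr_gt0 // subr_gt0.
apply: (lt_le_trans richardson_sum_sqr_div_gt1); apply: ler_sum => j _.
rewrite [leRHS]mulrAC ler_peMr ?divr_ge0 ?sqr_ge0 ?(ltW (richardson_alloc_gt0 j)) //.
by rewrite -(powRr0 (lam j)) ler_powR // richardson_scale_ge1 // -ltnS.
Qed.

End RichardsonRule.

Section Crossing.
Context {R : realType}.
Implicit Types (f g : R -> R) (lo hi l u x y s p : R).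

Definition crossing_on f lo hi x :=
  [/\ lo <= x <= hi, f x = 0,
      forall y, lo <= y < x -> f y < 0
    & forall y, x < y <= hi -> 0 < f y].

Lemma is_lower_crossingE (D : R -> R -> R) (q m M B e : R) :
  is_lower_crossing D q m M B e <->
  crossing_on (D^~ B) (m * B `^ (- (2 - q)^-1)) (M * B `^ (- (2 - q)^-1)) e.
Proof. by []. Qed.

Lemma crossing_on_unique f lo hi x y :
  crossing_on f lo hi x -> crossing_on f lo hi y -> x = y.
Proof.
move=> [/andP[lox xhi] fx0 fx_lt0 fx_gt0] [/andP[loy yhi] fy0 fy_lt0 fy_gt0].
case: (ltgtP x y) => // [xy|yx].
- by have := fx_gt0 y; rewrite xy yhi fy0 ltxx => /(_ isT).
- by have := fy_gt0 x; rewrite yx xhi fx0 ltxx => /(_ isT).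
Qed.

Lemma eq_crossing_on f g lo hi x : {in `[lo, hi]%R, f =1 g} ->
  crossing_on f lo hi x -> crossing_on g lo hi x.
Proof.
move=> fg [/andP[lox xhi] fx0 f_lt0 f_gt0].
have fgE y : lo <= y <= hi -> f y = g y by move=> yI; apply: fg; rewrite in_itv.
split=> [||y /andP[loy yx]|y /andP[xy yhi]]; first by rewrite lox.
- by rewrite -fgE ?lox.
- by rewrite -fgE ?f_lt0 ?loy // (le_trans (ltW yx)).
- by rewrite -fgE ?f_gt0 ?xy // yhi (le_trans lox (ltW xy)).
Qed.

Lemma crossing_on_scale f lo hi x s p : 0 < s -> 0 < p ->
  crossing_on (fun y => p * f (y * s)) lo hi x ->
  crossing_on f (lo * s) (hi * s) (x * s).
Proof.
move=> s_gt0 p_gt0 [/andP[lox xhi] fx0 f_lt0 f_gt0].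
have fE y : f y = (p * f (y / s * s)) / p by rewrite divfK ?gt_eqF // mulrC mulKf ?gt_eqF.
split=> [||y /andP[loy yx]|y /andP[xy yhi]].
- by rewrite !ler_pM2r ?lox.
- by move/eqP: fx0; rewrite mulf_eq0 gt_eqF // => /eqP.
- rewrite fE pmulr_llt0 ?invr_gt0 // f_lt0 //.
  by rewrite ler_pdivlMr // ltr_pdivrMr // loy.
- rewrite fE pmulr_lgt0 ?invr_gt0 // f_gt0 //.
  by rewrite ler_pdivrMr // ltr_pdivlMr // yhi andbT.
Qed.

Lemma crossing_on_increasing {f : R -> R} {lo hi l u : R} :
  lo <= l -> l <= u -> u <= hi ->
  {within `[l, u], continuous f} -> {in `[l, u]%R &, {homo f : x y / x < y}} ->
  (forall y, lo <= y <= l -> f y < 0) -> (forall y, u <= y <= hi -> 0 < f y) ->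
  exists2 x, l <= x <= u & crossing_on f lo hi x.
Proof.
move=> lol lu uhi f_cont f_incr f_lt0 f_gt0.
have fl_lt0 : f l < 0 by rewrite f_lt0 // lol lexx.
have fu_gt0 : 0 < f u by rewrite f_gt0 // lexx uhi.
have [|x] := @IVT R f l u 0 lu f_cont.
  by rewrite ge_min le_max (ltW fl_lt0) (ltW fu_gt0) orbT.
rewrite in_itv /= => /andP[lx xu] fx0; exists x; first by rewrite lx.
split=> [||y /andP[loy yx]|y /andP[xy yhi]].
- by rewrite (le_trans lol) ?(le_trans xu).
- exact: fx0.
- have [yl|ly] := leP y l; first by rewrite f_lt0 ?loy.
  by rewrite -fx0 f_incr // in_itv /= ?lx ?xu ?(ltW ly) ?(le_trans (ltW yx)).
- have [uy|yu] := leP u y; first by rewrite f_gt0 ?uy.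
  by rewrite -fx0 f_incr // in_itv /= ?lx ?xu ?(ltW yu) ?(le_trans lx (ltW xy)).
Qed.

End Crossing.

Section Profile.
Context {R : realType}.
Variables (a2 K q : R).
Hypotheses (a2_gt0 : 0 < a2) (K_gt0 : 0 < K) (q_ge0 : 0 <= q) (q_lt2 : q < 2).

Definition profile (y : R) := a2 * y ^+ 2 - K * y `^ q.

Definition profile' (y : R) := a2 * (2 * y) - K * (q * y `^ (q - 1)).

Definition crossing_constant := (K / a2) `^ (2 - q)^-1.

Local Notation C := crossing_constant.

Lemma crossing_constant_gt0 : 0 < C.
Proof. by rewrite powR_gt0 ?divr_gt0. Qed.

Lemma crossing_constant_powR : C `^ (2 - q) = K / a2.
Proof.
by rewrite -powRrM mulVf ?powRr1 ?divr_ge0 ?ltW // gt_eqF // subr_gt0.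
Qed.

Lemma profile_powRE (y : R) : 0 < y -> profile y = y `^ q * (a2 * y `^ (2 - q) - K).
Proof.
move=> y_gt0; rewrite /profile -(powR_mulrn 2 (ltW y_gt0)) (powR_split q _ y_gt0).
ring.
Qed.

Lemma profile_crossing_constant : profile C = 0.
Proof.
rewrite profile_powRE ?crossing_constant_gt0 // crossing_constant_powR.
by rewrite mulrCA divff ?gt_eqF // mulr1 subrr mulr0.
Qed.

Lemma profile_is_derive (y : R) : 0 < y -> is_derive y 1 profile (profile' y).
Proof.
move=> y_gt0.
have -> : profile = a2 \*: (id ^+ 2) - K \*: (@powR R ^~ q) by apply/funext.
have := is_deriveB (is_deriveZ a2 (is_deriveX 2 (is_derive_id y 1)))
  (is_deriveZ K (is_derive1_powR q y_gt0)).
by rewrite /profile' /GRing.scale /= expr1 mulr1.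
Qed.

Lemma mul_profile' (y : R) : 0 < y ->
  y * profile' y = q * profile y + (2 - q) * a2 * y ^+ 2.
Proof.
move=> y_gt0; have yyq : y * y `^ (q - 1) = y `^ q.
  by rewrite (powR_split 1 q y_gt0) powRr1 ?ltW.
by rewrite /profile' /profile -yyq; ring.
Qed.

Lemma profile'_near_crossing_constant :
  exists2 g, 0 < g & \forall y \near C, g < profile' y.
Proof.
have C_gt0 := crossing_constant_gt0.
have profile'C_gt0 : 0 < profile' C.
  rewrite -(pmulr_rgt0 _ C_gt0) mul_profile' // profile_crossing_constant mulr0 add0r.
  by rewrite !mulr_gt0 ?exprn_gt0 // subr_gt0.
exists (profile' C / 2); first by rewrite divr_gt0.
have powR_cont : {for C, continuous (@powR R ^~ (q - 1))}.
  apply: differentiable_continuous; apply/derivable1_diffP.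
  by apply: derivable_powR; rewrite in_itv /= C_gt0.
have profile'_cont : profile' y @[y --> C] --> profile' C.
  apply: cvgB; apply: cvgMr; apply: cvgMr; [exact: cvg_id | exact: powR_cont].
apply: (cvgr_gt _ profile'_cont).
by rewrite ltr_pdivrMr // ltr_pMr // ltr1n.
Qed.

Lemma profile_away_from_crossing {m d : R} : 0 < m -> 0 < d < C ->
  exists2 eps, 0 < eps & forall y, m <= y ->
    (y <= C - d -> profile y <= - eps) /\ (C + d <= y -> eps <= profile y).
Proof.
move=> m_gt0 /andP[d_gt0 dC]; have C_gt0 := crossing_constant_gt0.
have powR2q_lt (x y : R) : 0 <= x -> x < y -> x `^ (2 - q) < y `^ (2 - q).
  by apply: ltr_powR_base; rewrite subr_gt0.
have gap_left : 0 < K - a2 * (C - d) `^ (2 - q).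
  rewrite subr_gt0 mulrC -ltr_pdivlMr // -crossing_constant_powR powR2q_lt //.
    by rewrite subr_ge0 ltW.
  by rewrite ltrBlDr ltrDl.
have gap_right : 0 < a2 * (C + d) `^ (2 - q) - K.
  rewrite subr_gt0 mulrC -ltr_pdivrMr // -crossing_constant_powR powR2q_lt ?ltW //.
  by rewrite ltrDl.
pose g := Num.min (K - a2 * (C - d) `^ (2 - q)) (a2 * (C + d) `^ (2 - q) - K).
have g_gt0 : 0 < g by rewrite lt_min gap_left gap_right.
have [gl gr] : g <= K - a2 * (C - d) `^ (2 - q) /\ g <= a2 * (C + d) `^ (2 - q) - K.
  by rewrite !ge_min !lexx ?orbT.
exists (m `^ q * g); first by rewrite mulr_gt0 ?powR_gt0.
move=> y my; have y_gt0 := lt_le_trans m_gt0 my.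
have myq : m `^ q <= y `^ q by apply: ler_powR_base => //; apply: ltW.
have mq_gt0 : 0 < m `^ q by rewrite powR_gt0.
rewrite profile_powRE //; split=> [yCd|Cdy].
- have : a2 * y `^ (2 - q) <= a2 * (C - d) `^ (2 - q).
    by rewrite ler_pM2l //; apply: ler_powR_base => //; rewrite ?subr_ge0 ltW.
  nra.
- have : a2 * (C + d) `^ (2 - q) <= a2 * y `^ (2 - q).
    rewrite ler_pM2l //; apply: ler_powR_base => //;
    by rewrite ?subr_ge0 ltW // ltr_wpDr ?ltW.
  nra.
Qed.

Lemma profile_perturbation_crossing (f : R -> R) (m M d eps g : R) :
  0 < m -> 0 < d -> m < C - d -> C + d < M ->
  (forall y, m <= y ->
    (y <= C - d -> profile y <= - eps) /\ (C + d <= y -> eps <= profile y)) ->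
  {in `[C - d, C + d]%R, forall y, g < profile' y} ->
  (forall y, 0 < y -> derivable f y 1) ->
  (forall y, m <= y <= M -> `|f y| < eps /\ `|f^`() y| < g) ->
  exists2 x, `|C - x| <= d & crossing_on (fun y => profile y + f y) m M x.
Proof.
move=> m_gt0 d_gt0 md dM profile_away profile'_gt f_der f_small.
have window : C - d <= C + d by rewrite lerD2l -subr_ge0 opprK addr_ge0 ?ltW.
pose G := profile + f.
have G_is_derive (y : R) : 0 < y -> is_derive y 1 G (profile' y + (f^`())%classic y).
  move=> y_gt0; rewrite derive1E.
  exact: is_deriveD (profile_is_derive _ y_gt0) (derivableP (f_der _ y_gt0)).
have window_sub (y : R) : C - d <= y <= C + d -> m <= y <= M.
  by case/andP=> ly yu; rewrite (le_trans (ltW md) ly) (le_trans yu (ltW dM)).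
have window_gt0 (y : R) : C - d <= y <= C + d -> 0 < y.
  by move=> /window_sub /andP[my _]; exact: lt_le_trans my.
have G_cont : {within `[C - d, C + d], continuous G}.
  apply: derivable_within_continuous => y; rewrite in_itv /= => /window_gt0 y_gt0.
  by case: (G_is_derive y y_gt0).
have G_incr : {in `[C - d, C + d]%R &, {homo G : x y / x < y}}.
  apply: (gtr0_derive1_lt_cc _ _ G_cont) => y;
    rewrite in_itv /= => /andP[/ltW ly /ltW yu];
    have yI : C - d <= y <= C + d by rewrite ly yu.
    by case: (G_is_derive y (window_gt0 y yI)).
  rewrite derive1E; case: (G_is_derive y (window_gt0 y yI)) => _ ->.
  have [_ /ltrNnormlW f'_gt] := f_small y (window_sub y yI).
  by rewrite -(subrr g) ltrD // profile'_gt // in_itv.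
have G_lt0 (y : R) : m <= y <= C - d -> G y < 0.
  move=> /andP[my yl]; have [/(_ yl) profile_le _] := profile_away y my.
  have yI : m <= y <= M by rewrite my (le_trans yl (le_trans window (ltW dM))).
  have [/ltr_normlW f_lt _] := f_small y yI.
  by change (profile y + f y < 0); rewrite -(addNr eps) ler_ltD.
have G_gt0 (y : R) : C + d <= y <= M -> 0 < G y.
  move=> /andP[ly yM]; have my : m <= y := le_trans (ltW md) (le_trans window ly).
  have [_ /(_ ly) profile_ge] := profile_away y my.
  have yI : m <= y <= M by rewrite my yM.
  have [/ltrNnormlW f_gt _] := f_small y yI.
  by change (0 < profile y + f y); rewrite -(subrr eps) ler_ltD.
have [x xI cross] :=
  crossing_on_increasing (ltW md) window (ltW dM) G_cont G_incr G_lt0 G_gt0.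
by exists x; rewrite // ler_distlC.
Qed.

Variable F : R -> R -> R.
Hypothesis F_derivable : forall B y, 0 < B -> 0 < y -> derivable (F B) y 1.
Hypothesis F_vanishing : forall {m M : R}, 0 < m -> m <= M -> forall eta : R, 0 < eta ->
  \forall B \near +oo, forall x, m <= x <= M -> `|F B x| < eta /\ `|(F B)^`() x| < eta.

Lemma perturbed_profile_crossing (m M : R) : 0 < m -> m < C -> C < M ->
  \forall d \near 0^'+, \forall B \near +oo,
    exists2 x, `|C - x| <= d & crossing_on (fun y => profile y + F B y) m M x.
Proof.
move=> m_gt0 mC CM; have [g g_gt0 profile'_gt] := profile'_near_crossing_constant.
have /at_right_in_segment profile'_gt_window := profile'_gt.
near=> d.
have d_gt0 : 0 < d by near: d; exact: nbhs_right_gt.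
have md : m < C - d.
  by rewrite ltrBrDl -ltrBrDr; near: d; apply: nbhs_right_lt; rewrite subr_gt0.
have dM : C + d < M by rewrite -ltrBrDl; near: d; apply: nbhs_right_lt; rewrite subr_gt0.
have dC : 0 < d < C by rewrite d_gt0 -subr_gt0 (lt_trans m_gt0 md).
have [eps eps_gt0 profile_away] := profile_away_from_crossing m_gt0 dC.
have F_small_near := F_vanishing m_gt0 (ltW (lt_trans mC CM))
  (Num.min eps g) (ltac:(by rewrite lt_min eps_gt0 g_gt0)).
near=> B.
have B_gt0 : 0 < B by near: B; apply: nbhs_pinfty_gt; rewrite num_real.
apply: (@profile_perturbation_crossing (F B) m M d eps g) => //.
- by near: d.
- by move=> y; exact: F_derivable.
- have F_small_B : forall x, m <= x <= M ->
      `|F B x| < Num.min eps g /\ `|(F B)^`() x| < Num.min eps g by near: B.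
  by move=> y /F_small_B[]; rewrite !lt_min => /andP[-> _] /andP[_ ->].
Unshelve. all: end_near.
Qed.

End Profile.

Section LeadingOrder.
Context {R : realType}.
Variables (a2 K q : R) (D : R -> R -> R).
Hypotheses (a2_gt0 : 0 < a2) (K_gt0 : 0 < K).

Definition leading_delta (e B : R) := a2 * e ^+ 2 - K * e `^ q / B.

Definition remainder (e B : R) := D e B - leading_delta e B.

Section SmallNoise.
Context {db dv Cr : R}.
Hypotheses (db_gt0 : 0 < db) (dv_gt0 : 0 < dv) (q_ge2 : 2 <= q).
Hypothesis remainder_bound : forall B, 0 < B -> \forall e \near 0^'+,
  `|remainder e B| <= Cr * (e `^ (2 + db) + e `^ (q + dv) / B).

Lemma delta_div_sqr_cvg (B : R) : 0 < B ->
  D e B / e ^+ 2 - (a2 - K * e `^ (q - 2) / B) @[e --> 0^'+] --> 0.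
Proof.
move=> B_gt0; apply: norm_cvg0.
have bound_cvg0 :
    Cr * (e `^ db + e `^ (q + dv - 2) / B) @[e --> 0^'+] --> Cr * (0 + 0 / B).
  apply: cvgMr; apply: cvgD; first exact: powR_cvg0.
  by apply: cvgMl; apply: powR_cvg0; rewrite subr_gt0 (le_lt_trans q_ge2) // ltrDl.
rewrite mul0r addr0 mulr0 in bound_cvg0.
apply: (squeeze_cvgr _ (cvg_cst 0) bound_cvg0).
near=> e; rewrite normr_ge0 /=.
have e_gt0 : 0 < e by near: e; exact: nbhs_right_gt.
have -> : D e B / e ^+ 2 - (a2 - K * e `^ (q - 2) / B) = remainder e B / e ^+ 2.
  rewrite /remainder /leading_delta (powR_split 2 q e_gt0) powR_mulrn ?(ltW e_gt0) //.
  by field; rewrite !gt_eqF.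
rewrite normf_div [`|e ^+ 2|]ger0_norm ?sqr_ge0 // ler_pdivrMr ?exprn_gt0 //.
suff -> : Cr * (e `^ db + e `^ (q + dv - 2) / B) * e ^+ 2
    = Cr * (e `^ (2 + db) + e `^ (q + dv) / B) by near: e; exact: remainder_bound.
rewrite (powR_split 2 (2 + db) e_gt0) (powR_split 2 (q + dv) e_gt0).
by rewrite [2 + db]addrC addrK !powR_mulrn ?(ltW e_gt0) //; ring.
Unshelve. all: end_near.
Qed.

Lemma delta_div_sqr_cvg_to (B l : R) : 0 < B -> e `^ (q - 2) @[e --> 0^'+] --> l ->
  D e B / e ^+ 2 @[e --> 0^'+] --> a2 - K * l / B.
Proof.
move=> B_gt0 powR_cvg; rewrite -[a2 - _]add0r.
pose lead e := a2 - K * e `^ (q - 2) / B.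
have -> : (fun e => D e B / e ^+ 2) = (fun e => (D e B / e ^+ 2 - lead e) + lead e).
  by apply/funext => e; rewrite subrK.
apply: cvgD; first exact: delta_div_sqr_cvg.
by apply: cvgB; [exact: cvg_cst | apply: cvgMl; apply: cvgMr].
Qed.

Lemma delta_mse_near_sign (B s : R) : 0 < B -> e `^ (q - 2) @[e --> 0^'+] --> s ->
  (0 < a2 - K * s / B -> \forall e \near 0^'+, 0 < D e B) /\
  (a2 - K * s / B < 0 -> \forall e \near 0^'+, D e B < 0).
Proof.
move=> B_gt0 /(delta_div_sqr_cvg_to _ _ B_gt0) lim; split=> sgn.
  have ratio_gt0 := cvgr_gt _ lim _ sgn; near=> e.
  have e_gt0 : 0 < e by near: e; exact: nbhs_right_gt.
  have : 0 < D e B / e ^+ 2 by near: e; exact: ratio_gt0.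
  by rewrite pmulr_lgt0 // invr_gt0 exprn_gt0.
have ratio_lt0 := cvgr_lt _ lim _ sgn; near=> e.
have e_gt0 : 0 < e by near: e; exact: nbhs_right_gt.
have : D e B / e ^+ 2 < 0 by near: e; exact: ratio_lt0.
by rewrite pmulr_llt0 // invr_gt0 exprn_gt0.
Unshelve. all: end_near.
Qed.

Lemma delta_mse_sign_q2 (B : R) : q = 2 -> 0 < B ->
  (K / a2 < B -> \forall e \near 0^'+, 0 < D e B) /\
  (B < K / a2 -> \forall e \near 0^'+, D e B < 0).
Proof.
move=> q2 B_gt0; have powR0_cvg : e `^ (q - 2) @[e --> 0^'+] --> (1 : R).
  have -> : (fun e : R => e `^ (q - 2)) = cst (1 : R).
    by apply/funext => e; rewrite q2 subrr powRr0.
  exact: cvg_cst.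
have [pos neg] := delta_mse_near_sign _ _ B_gt0 powR0_cvg.
split=> [Bgt | Blt]; [apply: pos | apply: neg]; rewrite mulr1.
  by rewrite subr_gt0 ltr_pdivrMr // mulrC -ltr_pdivrMr.
by rewrite subr_lt0 ltr_pdivlMr // mulrC -ltr_pdivlMr.
Qed.

Lemma delta_mse_gt0_q_gt2 (B : R) : 2 < q -> 0 < B -> \forall e \near 0^'+, 0 < D e B.
Proof.
move=> q_gt2 B_gt0; have powR_cvg : e `^ (q - 2) @[e --> 0^'+] --> 0.
  by apply: powR_cvg0; rewrite subr_gt0.
have [pos _] := delta_mse_near_sign _ _ B_gt0 powR_cvg.
by apply: pos; rewrite mulr0 mul0r subr0.
Qed.

End SmallNoise.

Section LowerCrossing.
Hypotheses (q_ge0 : 0 <= q) (q_lt2 : q < 2).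

Local Notation C := (crossing_constant a2 K q).
Local Notation scale B := (B `^ (- (2 - q)^-1)).

Definition rescaled_remainder (B y : R) := B `^ (2 / (2 - q)) * remainder (y * scale B) B.

Hypothesis remainder_derivable :
  forall B e, 0 < B -> 0 < e -> derivable (fun x => remainder x B) e 1.
Hypothesis rescaled_remainder_vanishing :
  forall m M : R, 0 < m -> m <= M -> forall eta : R, 0 < eta ->
  \forall B \near +oo, forall x, m <= x <= M ->
    `|rescaled_remainder B x| < eta /\ `|(rescaled_remainder B)^`() x| < eta.

Lemma rescale_powR (B r : R) : 0 < B ->
  B `^ (2 / (2 - q)) * scale B `^ r = B `^ ((2 - r) / (2 - q)).
Proof.
move=> B_gt0; rewrite -powRrM -powRD ?(gt_eqF B_gt0) ?implybT //.
by congr (_ `^ _); field; rewrite subr_eq0 (gt_eqF q_lt2).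
Qed.

Lemma rescaled_delta_mse (B y : R) : 0 < B -> 0 <= y ->
  profile a2 K q y + rescaled_remainder B y = B `^ (2 / (2 - q)) * D (y * scale B) B.
Proof.
move=> B_gt0 y_ge0; have s_ge0 : 0 <= scale B by exact: powR_ge0.
have Ps2 : B `^ (2 / (2 - q)) * scale B ^+ 2 = 1.
  by rewrite -(powR_mulrn 2 s_ge0) rescale_powR // subrr mul0r powRr0.
have Psq : B `^ (2 / (2 - q)) * scale B `^ q = B.
  by rewrite rescale_powR // divff ?powRr1 ?ltW // subr_eq0 (gt_eqF q_lt2).
rewrite /rescaled_remainder /remainder /leading_delta /profile exprMn powRM //.
set P := B `^ _; set s := scale B; set Dys := D _ B.
have -> : P * (Dys - (a2 * (y ^+ 2 * s ^+ 2) - K * (y `^ q * s `^ q) / B))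
    = P * Dys - a2 * y ^+ 2 * (P * s ^+ 2) + K * y `^ q * (P * s `^ q) / B by ring.
by rewrite Ps2 Psq mulr1 mulfK ?gt_eqF //; ring.
Qed.

Lemma lower_crossing_near (m M : R) : 0 < m -> m < C -> C < M ->
  \forall d \near 0^'+, \forall B \near +oo,
    exists2 x, `|C - x| <= d & is_lower_crossing D q m M B (x * scale B).
Proof.
move=> m_gt0 mC CM.
have rescaled_derivable B y : 0 < B -> 0 < y -> derivable (rescaled_remainder B) y 1.
  move=> B_gt0 y_gt0; apply: (@derivable_scaled _ (remainder^~ B)).
  apply: remainder_derivable => //.
  by rewrite mulr_gt0 ?powR_gt0.
have near_C := perturbed_profile_crossing _ _ _ a2_gt0 K_gt0 q_ge0 q_lt2
  _ rescaled_derivable rescaled_remainder_vanishing _ _ m_gt0 mC CM.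
near=> d; near=> B.
have B_gt0 : 0 < B by near: B; apply: nbhs_pinfty_gt; rewrite num_real.
have [x Cx cross] : exists2 x, `|C - x| <= d &
    crossing_on (fun y => profile a2 K q y + rescaled_remainder B y) m M x.
  by near: B; near: d.
exists x => //; apply/is_lower_crossingE.
apply: crossing_on_scale (powR_gt0 _ B_gt0) (powR_gt0 (2 / (2 - q)) B_gt0) _.
apply: eq_crossing_on cross => y; rewrite in_itv /= => /andP[my _].
by rewrite rescaled_delta_mse // (le_trans (ltW m_gt0)).
Unshelve. all: end_near.
Qed.

Lemma lower_crossing_asymptotics (m M : R) : 0 < m -> m < C -> C < M ->
  exists eps_star : R -> R,
    (\forall B \near +oo, is_lower_crossing D q m M B (eps_star B))
    /\ (eps_star B / (C * scale B)) @[B --> +oo] --> (1 : R).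
Proof.
move=> m_gt0 mC CM; have C_gt0 := crossing_constant_gt0 _ _ q a2_gt0 K_gt0.
have near_C := lower_crossing_near _ _ m_gt0 mC CM.
(* Crossings are unique, so a chosen one agrees with those found near C for each d. *)
pose eps_star B := xget 0 (is_lower_crossing D q m M B).
have eps_starE B x : is_lower_crossing D q m M B x -> eps_star B = x.
  move=> cross; apply: crossing_on_unique (cross).
  exact: (xgetPex 0 (ex_intro _ x cross)).
exists eps_star; split.
  have [d near_d] := filter_ex near_C.
  by apply: filterS near_d => B [x _ cross]; rewrite (eps_starE B _ cross).
apply/cvgrPdist_lt => eta eta_gt0.
have small_d : \forall d \near 0^'+, d < eta * C /\ \forall B \near +oo,
    exists2 x, `|C - x| <= d & is_lower_crossing D q m M B (x * scale B).
  near=> d; split; last by near: d.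
  by near: d; apply: nbhs_right_lt; rewrite mulr_gt0.
have [d [d_lt near_d]] := filter_ex small_d.
near=> B.
have B_gt0 : 0 < B by near: B; apply: nbhs_pinfty_gt; rewrite num_real.
have [x Cx /eps_starE ->] : exists2 x, `|C - x| <= d &
    is_lower_crossing D q m M B (x * scale B) by near: B.
have s_gt0 : 0 < scale B by exact: powR_gt0.
rewrite -mulf_div divff ?gt_eqF // mulr1.
have -> : 1 - x / C = (C - x) / C by field; rewrite gt_eqF.
by rewrite normf_div (gtr0_norm C_gt0) ltr_pdivrMr // (le_lt_trans Cx).
Unshelve. all: end_near.
Qed.

End LowerCrossing.

End LeadingOrder.

Theorem corollary8 (R : realType) (k : nat) (lam c pi : nat -> R)
  (mu v : R -> R) (mu0 alpha nu q delta_v : R) :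
  is_richardson_rule k lam c pi ->
  (* bounded observable: bounded means, nonnegative variances *)
  (exists b : R, `|mu0| <= b /\ forall e, 0 <= e -> `|mu e| <= b /\ 0 <= v e) ->
  (* (A1(k)) *)
  alpha != 0 ->
  (exists a : nat -> R, a 1%N = alpha /\
     exists (C e0 : R), 0 < e0 /\
       forall j, (j <= k)%N -> forall e, 0 < e < e0 ->
         `|mu (lam j * e) - mu0
            - \sum_(1 <= m < k.+1) a m * lam j ^+ m * e ^+ m| <= C * e ^+ k.+1) ->
  (* (A4) *)
  0 < nu -> 0 <= q -> 0 < delta_v ->
  (exists (C e0 : R), 0 < e0 /\
     forall j, (j <= k)%N -> forall e, 0 < e < e0 ->
       `|v (lam j * e) - nu * (lam j * e) `^ q|
         <= C * (lam j * e) `^ (q + delta_v)) ->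
  (* (A5): remainder bound *)
  (exists delta_b : R, 0 < delta_b /\
     exists (C e0 : R), 0 < e0 /\
       forall e B, 0 < e < e0 -> 0 < B ->
         `|delta_remainder k lam c pi mu v mu0 alpha nu q e B|
           <= C * (e `^ (2 + delta_b) + e `^ (q + delta_v) / B)) ->
  (* (A5): differentiable remainder, rescaled version and its derivative
     tend to 0 uniformly on compact subsets of (0, oo), when q < 2 *)
  (q < 2 ->
     (forall B e, 0 < B -> 0 < e ->
        derivable (fun x => delta_remainder k lam c pi mu v mu0 alpha nu q x B) e 1)
     /\
     (forall m M : R, 0 < m -> m <= M -> forall eta : R, 0 < eta ->
        \forall B \near +oo, forall x, m <= x <= M ->
          let F := fun y => B `^ (2 / (2 - q)) *
             delta_remainder k lam c pi mu v mu0 alpha nu q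
               (y * B `^ (- (2 - q)^-1)) B in
          `|F x| < eta /\ `|F^`() x| < eta)) ->
  let K := K_qk k lam c pi nu q in
  let D := delta_mse k lam c pi mu v mu0 in
  0 < K
  /\
  (q < 2 ->
     let C := (K / alpha ^+ 2) `^ (2 - q)^-1 in
     forall m M : R, 0 < m -> m < C -> C < M ->
       exists eps_star : R -> R,
         (\forall B \near +oo, is_lower_crossing D q m M B (eps_star B))
         /\ (eps_star B / (C * B `^ (- (2 - q)^-1))) @[B --> +oo] --> (1 : R))
  /\
  (q = 2 ->
     let Bstar := K / alpha ^+ 2 in
     forall B, 0 < B ->
       (Bstar < B -> exists e0, 0 < e0 /\ forall e, 0 < e < e0 -> 0 < D e B)
       /\
       (B < Bstar -> exists e0, 0 < e0 /\ forall e, 0 < e < e0 -> D e B < 0))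
  /\
  (2 < q ->
     \forall B \near +oo, exists e0, 0 < e0 /\ forall e, 0 < e < e0 -> 0 < D e B).
Proof.
(* (A5) is assumed outright. *)
move=> rule _ alpha_neq0 _ nu_gt0 q_ge0 dv_gt0 _
  [db [db_gt0 [Cr [e0 [e0_gt0 remainder_le]]]]] smooth_remainder K D.
have K_gt0 : 0 < K := K_qk_gt0 rule nu_gt0 q_ge0.
have a2_gt0 : 0 < alpha ^+ 2 by rewrite exprn_even_gt0.
have remainder_near (B : R) : 0 < B -> \forall e \near 0^'+,
    `|remainder (alpha ^+ 2) K q D e B| <= Cr * (e `^ (2 + db) + e `^ (q + delta_v) / B).
  by move=> B_gt0; apply/near_right0P; exists e0; split=> // e /remainder_le; apply.
split=> //; split; [|split].
- move=> q_lt2 C m M m_gt0 mC CM.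
  have [derivable_rem vanishing_rem] := smooth_remainder q_lt2.
  exact: lower_crossing_asymptotics.
- move=> q2 Bstar B B_gt0; have q_ge2 : 2 <= q by rewrite q2.
  have [pos neg] := delta_mse_sign_q2 _ _ _ _ a2_gt0 db_gt0 dv_gt0 q_ge2
    remainder_near B q2 B_gt0.
  by split=> [/pos | /neg] /near_right0P.
- move=> q_gt2; near=> B; apply/near_right0P.
  apply: (delta_mse_gt0_q_gt2 _ _ _ _ a2_gt0 db_gt0 dv_gt0 (ltW q_gt2)
    remainder_near _ q_gt2).
  by near: B; apply: nbhs_pinfty_gt; rewrite num_real.
Unshelve. all: end_near.
Qed.
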